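(* Define a sequence $(a_n)_{n\ge1}$ by $a_1=1$, $a_2=2$ and $n a_n=(n+2)a_{n-1}+2(n+1)a_{n-2}$ for $n\ge 3$. Then: (a) for $n\ge 2$, the number of $\alpha\in\mathcal{ORCT}^*_n$ with no fixed points is $a_{n-1}$; (b) for $n\ge 1$, the number of $\alpha\in\mathcal{ORCT}^*_n$ with exactly one fixed point is $a_n$; (c) for $m\ge 2$, no $\alpha\in\mathcal{ORCT}^*_n$ has exactly $m$ fixed points.
   Context: $X_n=\{1,2,\dots,n\}$ with its usual order; maps are written on the right ($x\alpha$). A map $\alpha:X_n\to X_n$ is order-reversing if $x\le y$ implies $x\alpha\ge y\alpha$, and a contraction if $|x\alpha-y\alpha|\le|x-y|$ for all $x,y$. $\mathcal{ORCT}^*_n$ is the set of all order-reversing contractions $X_n\to X_n$ defined on all of $X_n$ (this includes the constant maps). A fixed point of $\alpha$ is $x$ with $x\alpha=x$. *)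

(* X_n = {1..n} is represented by 'I_n = {0..n-1}
   (shift by one; order, distances and fixed points are preserved). *)
From mathcomp Require Import all_boot all_order all_algebra.
Set Implicit Arguments. Unset Strict Implicit. Unset Printing Implicit Defensive.

Definition ndist (x y : nat) : nat := (x - y) + (y - x).

Definition order_reversing (n : nat) (f : {ffun 'I_n -> 'I_n}) : bool :=
  [forall x : 'I_n, forall y : 'I_n, (x <= y)%N ==> (f y <= f x)%N].

Definition contraction (n : nat) (f : {ffun 'I_n -> 'I_n}) : bool :=
  [forall x : 'I_n, forall y : 'I_n, (ndist (f x) (f y) <= ndist x y)%N].

Definition ORCT (n : nat) (f : {ffun 'I_n -> 'I_n}) : bool :=
  order_reversing f && contraction f.

Definition nfix (n : nat) (f : {ffun 'I_n -> 'I_n}) : nat :=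
  #|[set x : 'I_n | f x == x]|.

(* A map f : 'I_n -> 'I_n is identified with its graph i |-> f i on nat
   (extended by 0 outside [0, n)).  Such an f is an order-reversing
   contraction iff its graph is a unit descent: every step lowers the value by
   0 or 1 (ORCT_descent).  The proof then runs as follows.
   - An order-reversing map has at most one fixed point: part (c).
   - Splitting unit descents by their first step gives a Pascal-like
     recurrence whose solution yields |ORCT*_(m+1)| = 2^(m-1) (m + 2).
   - A fixed-point-free descent of length m+2 jumps over the diagonal at a
     pivot x (values x+1 at x and x at x+1); lowering the values up to x by one
     and deleting the value at x+1 is a bijection onto the descents of length
     m+1 with a fixed point.  So Z(m+2) = O(m+1), where Z(n) and O(n) count
     the maps in ORCT*_n with no and with one fixed point.
   Hence O(m+2) + O(m+1) = 2^m (m+3).  The recurrence of (a_n) gives the same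
   relation a_(k+2) + a_(k+1) = (k+3) 2^k, and O(1) = a_1 = 1, so O(n) = a_n,
   which is part (b); part (a) follows from Z(n) = O(n-1).  All bijective
   counting goes through card_transfer: mutually inverse maps between graphs
   yield equal numbers of maps. *)

From mathcomp Require Import all_boot all_order all_algebra.
From mathcomp Require Import zify ring.
From Stdlib Require Import FunctionalExtensionality.
Set Implicit Arguments. Unset Strict Implicit. Unset Printing Implicit Defensive.

Definition graph (k L : nat) (f : {ffun 'I_k -> 'I_L}) (i : nat) : nat :=
  odflt 0 (omap (fun j : 'I_k => val (f j)) (insub i)).

(* F is the graph of some map 'I_k -> 'I_L.+1. *)
Definition is_graph (k L : nat) (F : nat -> nat) : Prop :=
  (forall i, i < k -> F i <= L) /\ (forall i, k <= i -> F i = 0).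

Definition ffun_of_graph (k L : nat) (F : nat -> nat) : {ffun 'I_k -> 'I_L.+1} :=
  [ffun i : 'I_k => inord (F i)].

Lemma graphE k L (f : {ffun 'I_k -> 'I_L}) (j : 'I_k) : graph f j = f j.
Proof. by rewrite /graph valK. Qed.

Lemma graphP k L (f : {ffun 'I_k -> 'I_L.+1}) : is_graph k L (graph f).
Proof.
split=> i ik; last by rewrite /graph insubN // -leqNgt.
by rewrite -[i]/(val (Ordinal ik)) graphE -ltnS.
Qed.

Lemma graphK k L : cancel (@graph k L.+1) (ffun_of_graph k L).
Proof. by move=> f; apply/ffunP => i; rewrite ffunE graphE inord_val. Qed.

Lemma ffun_of_graphK k L F : is_graph k L F -> graph (ffun_of_graph k L F) = F.
Proof.
move=> [Fle F0]; apply: functional_extensionality => i.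
have [ik|ki] := ltnP i k; last by rewrite F0 // (graphP _).2.
by rewrite -[i]/(val (Ordinal ik)) graphE ffunE inordK // ltnS Fle.
Qed.

Lemma card_in_bij (T U : finType) (A : {set T}) (B : {set U}) (f : T -> U) (g : U -> T) :
  {in A, forall x, f x \in B} -> {in B, forall y, g y \in A} ->
  {in A, cancel f g} -> {in B, cancel g f} -> #|A| = #|B|.
Proof.
move=> fAB gBA fK gK; rewrite -(card_in_imset (can_in_inj fK)); apply: eq_card => y.
apply/imsetP/idP => [[x Ax ->]|By]; first exact: fAB.
by exists (g y); rewrite ?gBA ?gK.
Qed.

Lemma card_transfer k1 L1 k2 L2 (P1 P2 : (nat -> nat) -> bool)
    (Phi Psi : (nat -> nat) -> nat -> nat) :
  (forall F, is_graph k1 L1 F -> P1 F ->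
     [/\ is_graph k2 L2 (Phi F), P2 (Phi F) & Psi (Phi F) = F]) ->
  (forall G, is_graph k2 L2 G -> P2 G ->
     [/\ is_graph k1 L1 (Psi G), P1 (Psi G) & Phi (Psi G) = G]) ->
  #|[set f : {ffun 'I_k1 -> 'I_L1.+1} | P1 (graph f)]| =
  #|[set g : {ffun 'I_k2 -> 'I_L2.+1} | P2 (graph g)]|.
Proof.
move=> PhiP PsiP.
apply: (card_in_bij (f := fun f => ffun_of_graph k2 L2 (Phi (graph f)))
                    (g := fun g => ffun_of_graph k1 L1 (Psi (graph g)))).
- by move=> f; rewrite !inE => /(PhiP _ (graphP f)) [? ? _]; rewrite ffun_of_graphK.
- by move=> g; rewrite !inE => /(PsiP _ (graphP g)) [? ? _]; rewrite ffun_of_graphK.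
- move=> f; rewrite inE => /(PhiP _ (graphP f)) [? _ PhiK].
  by rewrite /= ffun_of_graphK // PhiK graphK.
- move=> g; rewrite inE => /(PsiP _ (graphP g)) [? _ PsiK].
  by rewrite /= ffun_of_graphK // PsiK graphK.
Qed.

Definition unit_descent (k : nat) (F : nat -> nat) : bool :=
  all (fun i => F i.+1 <= F i <= (F i.+1).+1) (iota 0 k.-1).

Lemma unit_descentP k F :
  reflect (forall i, i.+1 < k -> F i.+1 <= F i <= (F i.+1).+1) (unit_descent k F).
Proof.
apply: (iffP allP) => [dF i ik|dF i]; last by rewrite mem_iota => ik; apply: dF; lia.
by apply: dF; rewrite mem_iota; lia.
Qed.

Lemma descent_range k F : unit_descent k F ->
  forall i j, i <= j < k -> F j <= F i <= F j + (j - i).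
Proof.
move=> /unit_descentP dF i j /andP[ij jk].
rewrite -(subnKC ij) in jk *; elim: (j - i) jk => [|d IH] dk; first by rewrite addn0 subnn; lia.
have := IH ltac:(lia); have := dF (i + d) ltac:(lia); rewrite addnS; lia.
Qed.

Definition descents (k L : nat) : {set {ffun 'I_k -> 'I_L.+1}} :=
  [set f | unit_descent k (graph f)].

Lemma card_descents1 L : #|descents 1 L| = L.+1.
Proof.
have -> : descents 1 L = setT by apply/setP => f; rewrite !inE.
by rewrite cardsT card_ffun !card_ord expn1.
Qed.

Definition behead_graph (F : nat -> nat) (y : nat) : nat := F y.+1.
Definition cons_graph (a : nat) (G : nat -> nat) (y : nat) : nat :=
  if y is y'.+1 then G y' else a.

(* Descents of length k.+2 whose first step is b (0 or 1) correspond, by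
   removing the first value, to descents of length k.+1 with bound lowered by b. *)
Lemma card_first_step b k L L' : b <= 1 -> L' = b + L ->
  #|[set f : {ffun 'I_k.+2 -> 'I_L'.+1} |
       unit_descent k.+2 (graph f) && (graph f 0 == b + graph f 1)]| =
  #|descents k.+1 L|.
Proof.
move=> b1 ->; rewrite /descents.
apply: (card_transfer (P1 := fun F => unit_descent k.+2 F && (F 0 == b + F 1))
                     (P2 := unit_descent k.+1) (Phi := behead_graph)
                     (Psi := fun G => cons_graph (b + G 0) G)).
- move=> F [Fle F0] /andP[dF /eqP Fb]; have dF' := descent_range dF.
  split; last by apply: functional_extensionality => -[|y] /=.
  + split=> i ik; rewrite /behead_graph; last by apply: F0.
    have := dF' 1 i.+1 ltac:(lia); have := Fle 0; lia.
  + by apply/unit_descentP => i ik; move/unit_descentP: dF; apply.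
- move=> G [Gle G0] /unit_descentP dG; split=> //.
  + split=> -[|i] ik /=; [have := Gle 0 | have := Gle i | | apply: G0]; lia.
  + rewrite eqxx andbT; apply/unit_descentP => -[|i] ik /=; [lia | exact: dG].
Qed.

(* Splitting according to the first step gives the Pascal-like recurrence. *)
Lemma card_descentsS k L :
  #|descents k.+2 L.+1| = #|descents k.+1 L.+1| + #|descents k.+1 L|.
Proof.
rewrite -(@card_first_step 0 k L.+1 L.+1 isT erefl).
rewrite -(@card_first_step 1 k L L.+1 isT erefl).
rewrite -(cardsID [set f | graph f 0 == graph f 1] (descents k.+2 L.+1)).
congr (_ + _); apply: eq_card => f; rewrite !inE ?add0n //.
rewrite andbC; case dF: (unit_descent _ _) => //=.
by move/unit_descentP: dF => /(_ 0 isT) ?; apply/idP/idP => ?; lia.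
Qed.

Lemma card_descents k L : k <= L -> #|descents k.+1 L| * 2 = 2 ^ k * (2 * L + 2 - k).
Proof.
elim: k L => [|k IH] L kL; first by rewrite card_descents1 expn0; lia.
case: L kL => [|L] kL //; rewrite card_descentsS mulnDl !IH; try lia.
by rewrite expnS -mulnA mulnCA -mulnDr; congr (_ * _); lia.
Qed.

Lemma ORCT_descent n (f : {ffun 'I_n -> 'I_n}) : ORCT f = unit_descent n (graph f).
Proof.
apply/andP/unit_descentP => [[/forallP rev /forallP contr] i i1n|dF].
  have in_ : i < n by lia.
  move: (rev (Ordinal in_)) (contr (Ordinal in_)) => /forallP/(_ (Ordinal i1n)).
  move=> /implyP/(_ (leqnSn i)) le /forallP/(_ (Ordinal i1n)).
  rewrite -!graphE /= /ndist in le *; lia.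
have dF' := descent_range (introT (unit_descentP _ _) dF).
split; apply/forallP => x; apply/forallP => y; rewrite -?(graphE f) /ndist.
  by apply/implyP => xy; have := dF' x y; rewrite xy ltn_ord; lia.
have := dF' x y; have := dF' y x; rewrite !ltn_ord; lia.
Qed.

Lemma nfix_le1 n (f : {ffun 'I_n -> 'I_n}) : order_reversing f -> nfix f <= 1.
Proof.
move=> /forallP rev; apply/card_le1_eqP => x y; rewrite !inE => /eqP fx /eqP fy.
have fix_le (u v : 'I_n) : f u = u -> f v = v -> u <= v -> v <= u.
  by move=> fu fv uv; have := rev u => /forallP/(_ v)/implyP/(_ uv); rewrite fu fv.
apply/val_inj/eqP; rewrite eqn_leq.
by case/orP: (leq_total x y) => h; [rewrite h fix_le | rewrite h fix_le].
Qed.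

Definition has_fixpoint (k : nat) (F : nat -> nat) : bool := has (fun i => F i == i) (iota 0 k).

Lemma has_fixpointP k F : reflect (exists2 i, i < k & F i = i) (has_fixpoint k F).
Proof.
apply: (iffP hasP) => [[i]|[i ik Fi]]; first by rewrite mem_iota => ik /eqP; exists i.
by exists i; rewrite ?mem_iota ?Fi.
Qed.

Lemma nfix_gt0 n (f : {ffun 'I_n -> 'I_n}) : (0 < nfix f) = has_fixpoint n (graph f).
Proof.
rewrite card_gt0; apply/set0Pn/has_fixpointP => [[x]|[i ik fi]].
  by rewrite inE => /eqP fx; exists x; rewrite ?graphE ?fx.
by exists (Ordinal ik); rewrite inE; apply/eqP/val_inj; rewrite /= -graphE.
Qed.

Lemma crossing (P : pred nat) m : P 0 -> ~~ P m -> exists2 x, x < m & P x && ~~ P x.+1.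
Proof.
move=> P0; elim: m => [|m IH] Pm; first by rewrite P0 in Pm.
case PmT: (P m); first by exists m; rewrite ?PmT.
by have [x xm Px] := IH (negbT PmT); exists x; first exact: ltnW.
Qed.

Lemma fixfree_pivot k F : unit_descent k.+1 F -> ~~ has_fixpoint k.+1 F -> F k <= k ->
  exists2 x, x < k & F x = x.+1 /\ F x.+1 = x.
Proof.
move=> /unit_descentP dF /has_fixpointP nofix Fk.
have Fneq y : y <= k -> F y != y by move=> yk; apply/eqP => Fy; apply: nofix; exists y.
have F0 : 0 < F 0 by have := Fneq 0 isT; lia.
have [x xk /andP[Px nPx]] := @crossing (fun y => y < F y) k F0 ltac:(rewrite /=; lia).
by exists x => //; have := dF x xk; have := Fneq x.+1 xk; rewrite /= in Px nPx; lia.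
Qed.

(* The bijection between fixed-point-free descents of length m.+2 and descents
   of length m.+1 with a fixed point: shrink lowers the values before the pivot
   by one and deletes the value after it; expand undoes this around the fixed point. *)
Definition shrink (m : nat) (F : nat -> nat) (y : nat) : nat :=
  if y < m.+1 then (if y < F y then (F y).-1 else F y.+1) else 0.

Definition expand (m : nat) (G : nat -> nat) (y : nat) : nat :=
  if y < m.+2 then (if y <= G y then (G y).+1 else G y.-1) else 0.

Lemma shrink_at m F x : unit_descent m.+2 F -> x <= m -> F x = x.+1 -> F x.+1 = x ->
  forall y, y < m.+1 -> shrink m F y = if y <= x then (F y).-1 else F y.+1.
Proof.
move=> dF xm Fx Fx1 y ym; have dF' := descent_range dF.
rewrite /shrink ym; have [yx|xy] := leqP y x.
  by rewrite ifT //; have := dF' y x ltac:(lia); lia.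
by rewrite ifF //; have := dF' x.+1 y ltac:(lia); lia.
Qed.

Lemma expand_at m G x : is_graph m.+1 m G -> unit_descent m.+1 G -> x <= m -> G x = x ->
  forall y, y < m.+2 -> expand m G y = if y <= x then (G y).+1 else G y.-1.
Proof.
move=> [_ G0] dG xm Gx y ym; have dG' := descent_range dG.
rewrite /expand ym; have [yx|xy] := leqP y x.
  by rewrite ifT //; have := dG' y x ltac:(lia); lia.
rewrite ifF //; have [ym1|ym1] := leqP y m; first by have := dG' x y ltac:(lia); lia.
by rewrite G0 //; lia.
Qed.

Lemma shrink_spec m F :
  is_graph m.+2 m.+1 F -> unit_descent m.+2 F -> ~~ has_fixpoint m.+2 F ->
  [/\ is_graph m.+1 m (shrink m F),
      unit_descent m.+1 (shrink m F) && has_fixpoint m.+1 (shrink m F)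
    & expand m (shrink m F) = F].
Proof.
move=> [Fle F0] dF nofix; have dF' := descent_range dF; have /unit_descentP dF1 := dF.
have [x xm [Fx Fx1]] := fixfree_pivot dF nofix (Fle m.+1 (ltnSn _)).
have sF := shrink_at dF xm Fx Fx1.
have gS : is_graph m.+1 m (shrink m F).
  split=> y ym; last by rewrite /shrink ltnNge ym.
  rewrite sF //; case: (leqP y x) => yx; first by have := Fle y ltac:(lia); lia.
  by have := dF' x.+1 y.+1 ltac:(lia); lia.
have dS : unit_descent m.+1 (shrink m F).
  apply/unit_descentP => y ym; rewrite !sF; try lia.
  have [yx|xy|yx] := ltngtP y x.
  - by have := dF1 y ltac:(lia); have := dF' y.+1 x ltac:(lia); lia.
  - by have := dF1 y.+1 ltac:(lia); lia.
  - by rewrite yx Fx; have := dF1 x.+1 ltac:(lia); lia.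
have Sx : shrink m F x = x by rewrite sF // leqnn Fx.
split=> //; first by rewrite dS; apply/has_fixpointP; exists x.
apply: functional_extensionality => y.
have [ym|ym] := ltnP y m.+2; last by rewrite /expand ltnNge ym F0.
rewrite (expand_at gS dS xm Sx ym); case: (leqP y x) => yx.
  by rewrite sF ?yx; [have := dF' y x ltac:(lia); lia | lia].
case: y ym yx => [|y] //= ym yx; rewrite sF //; case: (leqP y x) => // yx'.
have {yx yx'} -> : y = x by lia.
by rewrite Fx Fx1.
Qed.

Lemma expand_spec m G :
  is_graph m.+1 m G -> unit_descent m.+1 G -> has_fixpoint m.+1 G ->
  [/\ is_graph m.+2 m.+1 (expand m G),
      unit_descent m.+2 (expand m G) && ~~ has_fixpoint m.+2 (expand m G)
    & shrink m (expand m G) = G].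
Proof.
move=> gG dG /has_fixpointP [x xm Gx]; have eG := expand_at gG dG xm Gx.
case: gG => Gle G0; have dG' := descent_range dG; have /unit_descentP dG1 := dG.
have gE : is_graph m.+2 m.+1 (expand m G).
  split=> y ym; last by rewrite /expand ltnNge ym.
  rewrite eG //; case: (leqP y x) => yx; first by have := Gle y ltac:(lia); lia.
  by have := Gle y.-1 ltac:(lia); lia.
have dE : unit_descent m.+2 (expand m G).
  apply/unit_descentP => y ym; rewrite !eG //; try lia.
  have [yx|xy|_] := ltngtP y x.
  - by have := dG1 y ltac:(lia); lia.
  - by case: y ym xy => [|y] //= ym xy; have := dG1 y ltac:(lia); lia.
  - by rewrite /=; lia.
split=> //.
  rewrite dE; apply/has_fixpointP => -[y ym]; rewrite eG //; case: (leqP y x) => yx.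
    by have := dG' y x ltac:(lia); lia.
  by have := dG' x y.-1 ltac:(lia); lia.
have Ex : expand m G x = x.+1 by rewrite eG ?leqnn ?Gx; lia.
have Ex1 : expand m G x.+1 = x by rewrite eG ?ltnn /=; lia.
apply: functional_extensionality => y.
have [ym|ym] := ltnP y m.+1; last by rewrite /shrink ltnNge ym G0.
rewrite (shrink_at dE xm Ex Ex1 ym) !eG; try lia.
by case: (leqP y x) => yx //; rewrite ifF //; lia.
Qed.

Lemma card_fixfree_fixpoint m :
  #|[set f : {ffun 'I_m.+2 -> 'I_m.+2} |
       unit_descent m.+2 (graph f) && ~~ has_fixpoint m.+2 (graph f)]| =
  #|[set f : {ffun 'I_m.+1 -> 'I_m.+1} |
       unit_descent m.+1 (graph f) && has_fixpoint m.+1 (graph f)]|.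
Proof.
apply: (card_transfer (P1 := fun F => unit_descent m.+2 F && ~~ has_fixpoint m.+2 F)
         (P2 := fun G => unit_descent m.+1 G && has_fixpoint m.+1 G)
         (Phi := shrink m) (Psi := expand m)).
- by move=> F gF /andP[dF nofix]; apply: shrink_spec.
- by move=> G gG /andP[dG fixG]; apply: expand_spec.
Qed.

Definition n_fixfree (n : nat) : nat :=
  #|[set f : {ffun 'I_n -> 'I_n} | ORCT f && (nfix f == 0)]|.
Definition n_onefix (n : nat) : nat :=
  #|[set f : {ffun 'I_n -> 'I_n} | ORCT f && (nfix f == 1)]|.

Lemma n_fixfree_graph n : n_fixfree n =
  #|[set f : {ffun 'I_n -> 'I_n} | unit_descent n (graph f) && ~~ has_fixpoint n (graph f)]|.
Proof. by apply: eq_card => f; rewrite !inE ORCT_descent -nfix_gt0 eqn0Ngt. Qed.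

Lemma n_onefix_graph n : n_onefix n =
  #|[set f : {ffun 'I_n -> 'I_n} | unit_descent n (graph f) && has_fixpoint n (graph f)]|.
Proof.
apply: eq_card => f; rewrite !inE -ORCT_descent -nfix_gt0.
case rf: (ORCT f) => //=; have := nfix_le1 (andP rf).1; lia.
Qed.

Lemma n_fixfreeS m : n_fixfree m.+2 = n_onefix m.+1.
Proof. by rewrite n_fixfree_graph n_onefix_graph card_fixfree_fixpoint. Qed.

(* The only map on 'I_1 is the identity. *)
Lemma n_fixfree1 : n_fixfree 1 = 0.
Proof.
rewrite n_fixfree_graph; apply: eq_card0 => f; rewrite !inE.
apply/negbTE/nandP; right; apply/negPn/has_fixpointP; exists 0 => //.
by have := (graphP f).1 0 isT; lia.
Qed.

(* A map in ORCT*_m.+1 has zero or one fixed point, so both counts add up to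
   |ORCT*_m.+1| = 2^(m-1) (m + 2). *)
Lemma n_fixfree_add_onefix m : (n_fixfree m.+1 + n_onefix m.+1) * 2 = 2 ^ m * (m + 2).
Proof.
have -> : n_fixfree m.+1 + n_onefix m.+1 = #|descents m.+1 m|.
  rewrite -(cardsID [set f | has_fixpoint m.+1 (graph f)]) addnC.
  by rewrite n_fixfree_graph n_onefix_graph; congr (_ + _); apply: eq_card => f;
     rewrite !inE andbC.
by rewrite card_descents //; congr (_ * _); lia.
Qed.

Lemma n_onefix1 : n_onefix 1 = 1.
Proof. by have := n_fixfree_add_onefix 0; rewrite n_fixfree1 expn0; lia. Qed.

(* O(m+2) + O(m+1) = Z(m+2) + O(m+2) = 2^m (m + 3). *)
Lemma n_onefix_sum m : n_onefix m.+2 + n_onefix m.+1 = 2 ^ m * (m + 3).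
Proof.
apply/eqP; rewrite -(eqn_pmul2r (isT : 0 < 2)) -(n_fixfreeS m) [n_onefix _ + _]addnC.
rewrite n_fixfree_add_onefix.
by rewrite expnS; apply/eqP; ring.
Qed.

Import GRing.Theory Num.Theory.
Local Open Scope ring_scope.

Lemma eq_from_consecutive_sums (R : zmodType) (u v : nat -> R) :
  u 1%N = v 1%N -> (forall k, u k.+2 + u k.+1 = v k.+2 + v k.+1) ->
  forall k, u k.+1 = v k.+1.
Proof. by move=> e1 e; elim=> // k IH; apply: (addIr (u k.+1)); rewrite {2}IH e. Qed.

Lemma consecutive_sums (R : numDomainType) (a : nat -> R)
  (ha1 : a 1%N = 1) (ha2 : a 2%N = 2)
  (hrec : forall n : nat, (3 <= n)%N ->
     n%:R * a n = (n + 2)%:R * a n.-1 + 2 * (n + 1)%:R * a n.-2) :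
  forall k, a k.+2 + a k.+1 = (k + 3)%:R * 2 ^+ k.
Proof.
elim=> [|k IH]; first by rewrite ha1 ha2 expr0 mulr1; ring.
have k3 : (k + 3)%:R != 0 :> R by rewrite pnatr_eq0 addn3.
have rec3 := hrec k.+3 isT; rewrite /= in rec3.
have IH' : a k.+2 = (k + 3)%:R * 2 ^+ k - a k.+1 by rewrite -IH addrK.
apply: (mulfI k3); rewrite mulrDr !addn3 rec3 IH' exprS !natrD -!natr1.
ring.
Qed.

Theorem lemma3p9 (a : nat -> rat)
  (ha1 : a 1%N = 1) (ha2 : a 2%N = 2)
  (hrec : forall n : nat, (3 <= n)%N ->
     n%:R * a n = (n + 2)%:R * a n.-1 + 2 * (n + 1)%:R * a n.-2) :
  (forall n : nat, (2 <= n)%N ->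
     (#|[set f : {ffun 'I_n -> 'I_n} | ORCT f && (nfix f == 0%N)]|)%:R = a n.-1)
  /\
  (forall n : nat, (1 <= n)%N ->
     (#|[set f : {ffun 'I_n -> 'I_n} | ORCT f && (nfix f == 1%N)]|)%:R = a n)
  /\
  (forall (n m : nat), (2 <= m)%N ->
     forall f : {ffun 'I_n -> 'I_n}, ORCT f -> nfix f <> m).
Proof.
have onefix_a n : (1 <= n)%N -> (n_onefix n)%:R = a n.
  case: n => // n _; apply: (eq_from_consecutive_sums (u := fun n => (n_onefix n)%:R)).
    by rewrite n_onefix1 ha1.
  by move=> k; rewrite -natrD n_onefix_sum natrM natrX mulrC (consecutive_sums ha1 ha2 hrec).
split; [|split].
- by case=> [|[|n]] // _; rewrite -/(n_fixfree n.+2) n_fixfreeS onefix_a.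
- exact: onefix_a.
- by move=> n m m2 f /andP[rev _] fm; have := nfix_le1 rev; rewrite fm; lia.
Qed.
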